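(* Let $S$ be a set of primes, $n\ge1$, and $\Lambda$ a lattice in $\mathbb R^n\times\mathbb Q_S^n$. Let $f_1,f_2$ be the coordinate projections of $\mathbb R^n\times\mathbb Q_S^n$ onto $\mathbb R^n$ and $\mathbb Q_S^n$. Then $f_1$ restricted to $\Lambda$ is injective and $f_2(\Lambda)$ is dense in $\mathbb Q_S^n$.
   Context: $\mathbb Q_S={\prod}'_{p\in S}(\mathbb Q_p,\mathbb Z_p)$ is the restricted product of the $p$-adic fields $\mathbb Q_p$, $p\in S$, with respect to the $p$-adic integers $\mathbb Z_p$: sequences $(x_p)$ with $x_p\in\mathbb Z_p$ for all but finitely many $p$, topologized so that $\prod_{p\in S}\mathbb Z_p$ is a compact open subgroup with the product topology. A lattice is a discrete subgroup with compact quotient. *)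

From HB Require Import structures.
From mathcomp Require Import all_boot all_order all_algebra.
From mathcomp Require Import all_classical all_reals.
Set Implicit Arguments. Unset Strict Implicit. Unset Printing Implicit Defensive.
Import Order.TTheory GRing.Theory Num.Theory.
Local Open Scope classical_set_scope.
Local Open Scope ring_scope.

(* An element x of Q_p is encoded by the sequence (a k)_k, where a k is the
   unique representative in Z[1/p] /\ [0, p^k) of the class of x in
   Q_p / p^k Z_p  (~= Z[1/p] / p^k Z).  Conversely every such compatible
   sequence comes from a unique x in Q_p.  In particular x \in Z_p iff a 0 = 0,
   and x - y \in p^k Z_p iff a_x k = a_y k. *)

Definition in_Z1p (p : nat) (q : rat) : Prop :=
  exists m : nat, ((p ^ m)%N%:R * q) \is a Num.int.

Definition padic_code (p : nat) (a : nat -> rat) : Prop :=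
  forall k : nat,
    [/\ in_Z1p p (a k), 0 <= a k, a k < (p ^ k)%N%:R
      & ((a k.+1 - a k) / (p ^ k)%N%:R) \is a Num.int].

(* Q_S = restricted product of Q_p (p in S) w.r.t. Z_p: a family indexed by
   all p : nat, zero outside S, with x_p \in Z_p for all but finitely many p. *)
Definition QS_code := nat -> nat -> rat.

Definition QS_elt (S : set nat) (x : QS_code) : Prop :=
  [/\ (forall p, S p -> padic_code p (x p)),
      (forall p, ~ S p -> forall k, x p k = 0)
    & exists B : nat, forall p, (B < p)%N -> x p 0%N = 0].

Definition ratmod (s m : rat) : rat := s - (Num.floor (s / m))%:~R * m.

Definition QS_add (x y : QS_code) : QS_code :=
  fun p k => ratmod (x p k + y p k) (p ^ k)%N%:R.
Definition QS_opp (x : QS_code) : QS_code :=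
  fun p k => ratmod (- x p k) (p ^ k)%N%:R.
Definition QS_zero : QS_code := fun _ _ => 0.

Definition QSn (n : nat) := 'I_n -> QS_code.

Definition QSn_elt (S : set nat) (n : nat) (w : QSn n) : Prop :=
  forall i, QS_elt S (w i).

(* K : nat -> nat with finite support; basic neighbourhood of w:
   w + prod_p p^(K p) Z_p  (so Z_p at almost every p). *)
Definition fin_supp (K : nat -> nat) : Prop :=
  exists B : nat, forall p, (B < p)%N -> K p = 0%N.

Definition QSn_nbhd (S : set nat) (n : nat) (w : QSn n) (K : nat -> nat)
  : set (QSn n) :=
  [set v | forall i p, S p -> v i p (K p) = w i p (K p)].

Definition QSn_open (S : set nat) (n : nat) (V : set (QSn n)) : Prop :=
  forall w, QSn_elt S w -> V w ->
    exists K, fin_supp K /\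
      (forall v, QSn_elt S v -> QSn_nbhd S w K v -> V v).

Definition QSn_dense (S : set nat) (n : nat) (D : set (QSn n)) : Prop :=
  forall V, QSn_open S V -> (exists w, QSn_elt S w /\ V w) ->
    exists w, D w /\ V w.

Definition Gcar (R : realType) (n : nat) :=
  (('I_n -> R) * QSn n)%type.

Definition G_elt (R : realType) (S : set nat) (n : nat) (g : Gcar R n) : Prop :=
  QSn_elt S g.2.

Definition G_add (R : realType) (n : nat) (g h : Gcar R n) : Gcar R n :=
  (fun i => g.1 i + h.1 i, fun i => QS_add (g.2 i) (h.2 i)).
Definition G_opp (R : realType) (n : nat) (g : Gcar R n) : Gcar R n :=
  (fun i => - g.1 i, fun i => QS_opp (g.2 i)).
Definition G_zero (R : realType) (n : nat) : Gcar R n :=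
  (fun _ => 0, fun _ => QS_zero).

Definition G_nbhd (R : realType) (S : set nat) (n : nat) (g : Gcar R n)
  (eps : R) (K : nat -> nat) : set (Gcar R n) :=
  [set h | (forall i, `|h.1 i - g.1 i| < eps) /\ QSn_nbhd S g.2 K h.2].

Definition G_open (R : realType) (S : set nat) (n : nat) (A : set (Gcar R n))
  : Prop :=
  forall g, G_elt S g -> A g ->
    exists eps : R, exists K, 0 < eps /\ fin_supp K /\
      (forall h, G_elt S h -> G_nbhd S g eps K h -> A h).

Definition is_subgroup (R : realType) (S : set nat) (n : nat)
  (L : set (Gcar R n)) : Prop :=
  [/\ L `<=` @G_elt R S n, L (G_zero R n),
      (forall x y, L x -> L y -> L (G_add x y))
    & (forall x, L x -> L (G_opp x))].

Definition is_discrete (R : realType) (S : set nat) (n : nat)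
  (L : set (Gcar R n)) : Prop :=
  forall l, L l -> exists U, [/\ G_open S U, U l &
                              forall m, L m -> U m -> m = l].

(* G / L compact: open sets of G/L are exactly images of L-saturated open
   sets of G, so compactness of G/L means every cover of G by L-saturated
   open sets has a finite subcover. *)
Definition cocompact (R : realType) (S : set nat) (n : nat)
  (L : set (Gcar R n)) : Prop :=
  forall C : set (set (Gcar R n)),
    (forall U, C U -> G_open S U /\
        (forall g l, G_elt S g -> U g -> L l -> U (G_add g l))) ->
    (forall g, G_elt S g -> exists U, C U /\ U g) ->
    exists F : set (set (Gcar R n)),
      [/\ finite_set F, F `<=` C &
          forall g, G_elt S g -> exists U, F U /\ U g].

Definition is_lattice (R : realType) (S : set nat) (n : nat)
  (L : set (Gcar R n)) : Prop :=
  [/\ is_subgroup S L, is_discrete S L & cocompact S L].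

From HB Require Import structures.
From mathcomp Require Import all_boot all_order all_algebra.
From mathcomp Require Import all_classical all_reals.
From mathcomp Require Import lra.
Set Implicit Arguments. Unset Strict Implicit. Unset Printing Implicit Defensive.
Import Order.TTheory GRing.Theory Num.Theory.
Local Open Scope classical_set_scope.
Local Open Scope ring_scope.

(* Injectivity: if [z] in [L] has real part [0], then some multiple [M z],
   [M > 0], lies in any given basic neighbourhood of [0] (clear the finitely
   many denominators involved), so discreteness forces [M z = 0]; and [Q_S] is
   torsion-free.
   Density: fix a basic open subgroup [U = prod_p p^(K p) Z_p^n]. By
   cocompactness [f_2(L) + U] has bounded index [N] in [Q_S^n]: among [N + 1]
   points two are congruent. For [x] in [Q_p^n] put [y = x / p^N]; the order of
   [y] modulo [f_2(L) + U] is at most [N] and divides a power of [p], hence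
   divides [p^N], so [x] lies in [f_2(L) + U]. Summing over the finitely many
   primes where a given point is not in [U] gives every class. *)

Section SubgroupMultiples.
Variables (V : zmodType) (E : set V).
Hypotheses (E0 : E 0) (EB : forall a b, E a -> E b -> E (a - b)).

Lemma subgroupD a b : E a -> E b -> E (a + b).
Proof. by move=> Ea Eb; rewrite -[b]opprK -[- b]sub0r; apply: EB => //; apply: EB. Qed.

Lemma subgroup_mulrn x k : E x -> E (x *+ k).
Proof. by move=> Ex; elim: k => [|k IH]; rewrite ?mulr0n // mulrS; apply: subgroupD. Qed.

Lemma subgroup_mulrn_gcdn x c d : E (x *+ c) -> E (x *+ d) -> E (x *+ gcdn c d).
Proof.
case: (posnP c) => [->|c_gt0 Ec Ed]; first by rewrite gcd0n.
have [a _ /dvdnP[k Ek]] := Bezoutl d c_gt0.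
have -> : gcdn c d = (k * c - a * d)%N by rewrite -Ek addnK.
rewrite mulrnBr; last by rewrite -Ek leq_addl.
by rewrite mulnC [(a * d)%N]mulnC !mulrnA; apply: EB; apply: subgroup_mulrn.
Qed.

(* The order of [x] modulo [E] divides [p ^ k] and is at most [N < p ^ N]. *)
Lemma subgroup_mulrn_expn x p d k N : prime p -> (0 < d <= N)%N ->
  E (x *+ d) -> E (x *+ p ^ k) -> E (x *+ p ^ N).
Proof.
move=> p_pr /andP[d_gt0 ledN] Ed Epk.
have Eg := subgroup_mulrn_gcdn Ed Epk.
have [e _ gE] := dvdn_pfactor _ _ p_pr (dvdn_gcdr d (p ^ k)).
have leeN : (e <= N)%N.
  rewrite -(leq_exp2l _ _ (prime_gt1 p_pr)) -gE ltnW //.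
  apply: leq_ltn_trans (ltn_expl _ (prime_gt1 p_pr)).
  exact: leq_trans (dvdn_leq d_gt0 (dvdn_gcdl d _)) ledN.
by rewrite -(subnKC leeN) expnD mulrnA -gE; apply: subgroup_mulrn.
Qed.

End SubgroupMultiples.

Local Notation pk p k := ((p ^ k)%N%:R : rat).

Definition modeq (m a b : rat) := ((a - b) / m) \is a Num.int.

Lemma modeq_refl m a : modeq m a a.
Proof. by rewrite /modeq subrr mul0r rpred0. Qed.

Lemma modeq_sym m a b : modeq m a b -> modeq m b a.
Proof. by rewrite /modeq -opprB mulNr rpredN. Qed.

Lemma modeq_trans m a b c : modeq m a b -> modeq m b c -> modeq m a c.
Proof. by rewrite /modeq => hab hbc; rewrite -[a](subrK b) -addrA mulrDl rpredD. Qed.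

Lemma modeqD m a b a' b' :
  modeq m a a' -> modeq m b b' -> modeq m (a + b) (a' + b').
Proof.
by move=> ha hb; rewrite /modeq opprD addrACA mulrDl; apply: rpredD.
Qed.

Lemma modeqN m a b : modeq m a b -> modeq m (- a) (- b).
Proof. by rewrite /modeq -opprD mulNr rpredN. Qed.

Lemma modeqB m a b a' b' :
  modeq m a a' -> modeq m b b' -> modeq m (a - b) (a' - b').
Proof. by move=> ha hb; apply/modeqD/modeqN. Qed.

Lemma modeq_ratmod s m : m != 0 -> modeq m (ratmod s m) s.
Proof.
by move=> m0; rewrite /modeq /ratmod addrAC subrr add0r mulNr mulrK // rpredN intr_int.
Qed.

Lemma ratmod_ge0 s m : 0 < m -> 0 <= ratmod s m.
Proof.
move=> m_gt0; have := real_floor_le (num_real (s / m)).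
by rewrite /ratmod ler_pdivlMr // subr_ge0.
Qed.

Lemma ratmod_lt s m : 0 < m -> ratmod s m < m.
Proof.
move=> m_gt0; have := real_floorD1_gt (num_real (s / m)).
by rewrite /ratmod ltr_pdivrMr // intrD mulrDl mul1r ltrBlDl.
Qed.

Lemma modeq_eq m a b : 0 <= a < m -> 0 <= b < m -> modeq m a b -> a = b.
Proof.
move=> /andP[a_ge0 a_lt] /andP[b_ge0 b_lt] hab.
have m_gt0 : 0 < m by apply: le_lt_trans a_lt.
have small : `|(a - b) / m| < 1.
  rewrite normrM normfV (gtr0_norm m_gt0) ltr_pdivrMr // mul1r.
  by rewrite ltr_norml; apply/andP; split; lra.
have /eqP : (a - b) / m = 0.
  by apply/eqP; apply: contraTT small => /(norm_intr_ge1 hab); rewrite leNgt.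
by rewrite mulf_eq0 invr_eq0 (gt_eqF m_gt0) orbF subr_eq0 => /eqP.
Qed.

Lemma ratmod0 m : ratmod 0 m = 0.
Proof. by rewrite /ratmod mul0r floor0 mul0r subr0. Qed.

Lemma pkD p a b : pk p (a + b) = pk p a * pk p b.
Proof. by rewrite expnD natrM. Qed.

Lemma pk_gt0 p k : (0 < p)%N -> 0 < pk p k.
Proof. by move=> p_gt0; rewrite ltr0n expn_gt0 p_gt0. Qed.

Lemma pk_neq0 p k : (0 < p)%N -> pk p k != 0.
Proof. by move=> p_gt0; rewrite gt_eqF ?pk_gt0. Qed.

Lemma modeq_pk_le p j k a b : (0 < p)%N -> (j <= k)%N ->
  modeq (pk p k) a b -> modeq (pk p j) a b.
Proof.
move=> p_gt0 jk; rewrite /modeq -(subnKC jk) pkD invfM mulrA => h.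
by rewrite -(divfK (pk_neq0 (k - j) p_gt0) ((a - b) / _)) rpredM // natr_int.
Qed.

Lemma modeq_mulrn_expn p s k z : (0 < p)%N -> (pk p s * z) \is a Num.int ->
  modeq (pk p k) (z *+ p ^ (k + s)) 0.
Proof.
move=> p_gt0 h; rewrite /modeq subr0 -(mulr_natl z) pkD.
by rewrite mulrAC [_ * pk p s]mulrC mulfK ?pk_neq0.
Qed.

Lemma in_Z1p_le p z m m' : (m <= m')%N ->
  (pk p m * z) \is a Num.int -> (pk p m' * z) \is a Num.int.
Proof. by move=> /subnKC <- h; rewrite addnC pkD -mulrA rpredM ?natr_int. Qed.

Lemma in_Z1p0 p : in_Z1p p 0.
Proof. by exists 0%N; rewrite mulr0 rpred0. Qed.

Lemma in_Z1p_uniform (I : finType) p (z : I -> rat) :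
  (forall i, in_Z1p p (z i)) -> exists s, forall i, (pk p s * z i) \is a Num.int.
Proof.
move=> /choice[m hm]; exists (\max_i m i)%N => i.
exact: in_Z1p_le (leq_bigmax i) (hm i).
Qed.

Lemma padic_code_Z1p p a k : padic_code p a -> in_Z1p p (a k).
Proof. by move=> ha; case: (ha k). Qed.

Lemma padic_code_bounds p a k : padic_code p a -> 0 <= a k < pk p k.
Proof. by move=> ha; case: (ha k) => _ -> ->. Qed.

Lemma padic_code_modeq p a j k : (0 < p)%N -> padic_code p a -> (j <= k)%N ->
  modeq (pk p j) (a k) (a j).
Proof.
move=> p_gt0 ha; elim: k => [|k IH]; first by rewrite leqn0 => /eqP ->; apply: modeq_refl.
rewrite leq_eqVlt ltnS => /orP[/eqP <-|jk]; first exact: modeq_refl.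
by apply: modeq_trans (IH jk); apply: (modeq_pk_le p_gt0 jk); case: (ha k).
Qed.

Lemma padic_code_eq p a b k : padic_code p a -> padic_code p b ->
  modeq (pk p k) (a k) (b k) -> a k = b k.
Proof. by move=> ha hb; apply: modeq_eq; apply: padic_code_bounds. Qed.

Lemma padic_code_ratmod p z : (0 < p)%N -> in_Z1p p z ->
  padic_code p (fun k => ratmod z (pk p k)).
Proof.
move=> p_gt0 [m hm] k; split.
- exists m; rewrite /ratmod mulrBr rpredB // rpredM ?rpredM ?natr_int ?intr_int //.
- exact/ratmod_ge0/pk_gt0.
- exact/ratmod_lt/pk_gt0.
- apply: (@modeq_trans _ _ z); last exact/modeq_sym/modeq_ratmod/pk_neq0.
  exact: modeq_pk_le p_gt0 (leqnSn k) (modeq_ratmod _ (pk_neq0 _ p_gt0)).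
Qed.

(* At level [k + M] the bounded-order lemma (with [d = N = M]) gives
   [p ^ M a (k + M) = 0] modulo [p ^ (k + M)], i.e. [a (k + M) = 0] modulo [p ^ k]. *)
Lemma padic_code_torsion_free p a M : prime p -> padic_code p a -> (0 < M)%N ->
  (forall k, modeq (pk p k) (a k *+ M) 0) -> forall k, a k = 0.
Proof.
move=> p_pr ha M_gt0 hM k; have p_gt0 := prime_gt0 p_pr.
pose E := [set q : rat | modeq (pk p (k + M)) q 0].
have [s hs] := padic_code_Z1p (k + M) ha.
have EpM : E (a (k + M)%N *+ p ^ M).
  apply: (@subgroup_mulrn_expn _ E _ _ _ p M (k + M + s)%N) => //.
  - exact: modeq_refl.
  - by move=> u v hu hv; rewrite /E /= -(subr0 0); apply: modeqB.
  - by rewrite M_gt0 leqnn.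
  - exact: hM.
  - exact: modeq_mulrn_expn.
have a_kM : modeq (pk p k) (a (k + M)%N) 0.
  move: EpM; rewrite /E /= /modeq !subr0 -(mulr_natl (a _)) pkD.
  by rewrite [pk p k * _]mulrC invfM mulrA [pk p M * _]mulrC mulfK ?pk_neq0.
apply: modeq_eq (padic_code_bounds k ha) _ _; first by rewrite lexx pk_gt0.
exact: modeq_trans (modeq_sym (padic_code_modeq p_gt0 ha (leq_addr M k))) a_kM.
Qed.

Lemma exists_mulrn_int (I : finType) (q : I -> rat) :
  exists2 M, (0 < M)%N & forall i, q i *+ M \is a Num.int.
Proof.
exists (\prod_i `|denq (q i)|)%N.
  by rewrite prodn_gt0 // => i; rewrite absz_gt0 denq_neq0.
move=> i; rewrite (bigD1 i) //= mulrnA; apply: rpredMn.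
by rewrite pmulrn gtz0_abs ?denq_gt0 // -mulrzr -numqE intr_int.
Qed.

Lemma QSn_elt_bound S n (w : QSn n) : QSn_elt S w ->
  exists B, forall i p, (B < p)%N -> w i p 0%N = 0.
Proof.
move=> hw; have /choice[B hB] : forall i, exists B, forall p, (B < p)%N -> w i p 0%N = 0.
  by move=> i; case: (hw i).
by exists (\max_i B i)%N => i p ltBp; apply/hB/(leq_ltn_trans (leq_bigmax i) ltBp).
Qed.

Lemma QSn_level_bound S n (w : QSn n) K : fin_supp K -> QSn_elt S w ->
  exists B, forall i p, (B < p)%N -> w i p (K p) = 0.
Proof.
move=> [BK hK] /QSn_elt_bound[Bw hw]; exists (maxn BK Bw) => i p.
by rewrite gtn_max => /andP[/hK -> /hw].
Qed.

Lemma QSn_mulrn_level_eq0 S n (w : QSn n) K : fin_supp K -> QSn_elt S w ->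
  exists2 M, (0 < M)%N & forall i p, modeq (pk p (K p)) (w i p (K p) *+ M) 0.
Proof.
move=> hK /(QSn_level_bound hK)[B hB].
have [M M_gt0 hM] := exists_mulrn_int (fun ip : 'I_n * 'I_B.+1 =>
  w ip.1 ip.2 (K ip.2) / pk ip.2 (K ip.2)).
exists M => // i p; case: (ltnP B p) => [/hB->|leBp]; first by rewrite mul0rn; apply: modeq_refl.
by rewrite /modeq subr0 mulrnAl; apply: (hM (i, Ordinal (leBp : (p < B.+1)%N))).
Qed.

Lemma QSn_elt_code S n (w : QSn n) i p : QSn_elt S w -> S p -> padic_code p (w i p).
Proof. by move=> hw Sp; case: (hw i) => /(_ p Sp). Qed.

Lemma QSn_elt_offS S n (w : QSn n) i p k : QSn_elt S w -> ~ S p -> w i p k = 0.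
Proof. by move=> hw nSp; case: (hw i) => _ /(_ p nSp). Qed.

Lemma finite_cover_pigeonhole (T : Type) (F : set (set T)) : finite_set F ->
  exists N, forall pt : nat -> T, (forall j, exists U, F U /\ U (pt j)) ->
  exists j j' U, [/\ (j < j' <= N)%N, F U, U (pt j) & U (pt j')].
Proof.
move=> /finite_seqP[s ->]; exists (size s) => pt cover.
have /choice[idx idxP] : forall j : 'I_(size s).+1,
    exists k : 'I_(size s), nth set0 s k (pt j).
  move=> j; have [U [sU Upt]] := cover j.
  by exists (Ordinal (etrans (index_mem U s) sU)); rewrite /= nth_index.
have [/injectiveP idx_inj|/injectivePn[j [j' neq_jj' idx_eq]]] := boolP (injectiveb idx).
  by have := leq_card _ idx_inj; rewrite !card_ord ltnn.
wlog lt_jj' : j j' neq_jj' idx_eq / (j < j')%N.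
  move=> hw; case: (ltngtP j j') => [|lt_j'j|/val_inj eq_jj']; first exact: hw.
    by apply: (hw j' j) => //; rewrite eq_sym.
  by rewrite eq_jj' eqxx in neq_jj'.
exists j, j', (nth set0 s (idx j)); split; last 2 first.
- exact: idxP.
- by rewrite idx_eq; apply: idxP.
- by rewrite lt_jj' -ltnS ltn_ord.
- exact: mem_nth.
Qed.

Section Lattice.
Variables (R : realType) (S : set nat) (n : nat) (L : set (Gcar R n)).
Hypotheses (S_prime : forall p, S p -> prime p) (L_subgroup : is_subgroup S L).

Let S_gt0 p : S p -> (0 < p)%N. Proof. by move/S_prime/prime_gt0. Qed.

Let L_elt l : L l -> G_elt S l. Proof. by case: L_subgroup => + _ _ _; apply. Qed.
Let L0 : L (G_zero R n). Proof. by case: L_subgroup. Qed.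
Let LD l l' : L l -> L l' -> L (G_add l l'). Proof. by case: L_subgroup => _ _ + _; apply. Qed.
Let LN l : L l -> L (G_opp l). Proof. by case: L_subgroup => _ _ _; apply. Qed.

Lemma G_add_modeq (g h : Gcar R n) i p k : S p ->
  modeq (pk p k) ((G_add g h).2 i p k) (g.2 i p k + h.2 i p k).
Proof. by move=> Sp; apply/modeq_ratmod/pk_neq0/S_gt0. Qed.

Lemma G_sub_modeq (g h : Gcar R n) i p k : S p ->
  modeq (pk p k) ((G_add g (G_opp h)).2 i p k) (g.2 i p k - h.2 i p k).
Proof.
move=> Sp; apply: modeq_trans (G_add_modeq _ _ _ _ Sp) _.
by apply/modeqD/modeq_ratmod/pk_neq0/S_gt0 => //; apply: modeq_refl.
Qed.

Definition G_muln (g : Gcar R n) (j : nat) : Gcar R n :=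
  iter j (fun h => G_add h g) (G_zero R n).

Lemma L_muln g j : L g -> L (G_muln g j).
Proof. by move=> Lg; elim: j => //= j IH; apply: LD. Qed.

Lemma G_muln_real g j : (forall i, g.1 i = 0) -> forall i, (G_muln g j).1 i = 0.
Proof. by move=> g1 i; elim: j => //= j ->; rewrite g1 addr0. Qed.

Lemma G_muln_modeq g j i p k : S p ->
  modeq (pk p k) ((G_muln g j).2 i p k) (g.2 i p k *+ j).
Proof.
move=> Sp; elim: j => [|j IH]; first exact: modeq_refl.
apply: modeq_trans (G_add_modeq _ _ _ _ Sp) _.
by rewrite mulrSr; apply: modeqD IH (modeq_refl _ _).
Qed.

Section Discrete.
Hypothesis L_discrete : is_discrete S L.

Lemma lattice_real_kernel_mulrn_eq0 z : L z -> (forall i, z.1 i = 0) ->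
  exists2 M, (0 < M)%N & G_muln z M = G_zero R n.
Proof.
move=> Lz z1; have [U [U_open U0 U_isolated]] := L_discrete L0.
have [eps [K [eps_gt0 [K_fin nbhdU]]]] := U_open _ (L_elt L0) U0.
have [M M_gt0 hM] := QSn_mulrn_level_eq0 K_fin (L_elt Lz).
exists M => //; apply: U_isolated; first exact: L_muln.
apply: nbhdU; first exact/L_elt/L_muln.
split=> [i|i p Sp]; first by rewrite G_muln_real // subrr normr0.
have Mz_code := QSn_elt_code i (L_elt (L_muln M Lz)) Sp.
apply: modeq_eq (padic_code_bounds _ Mz_code) _ _; first by rewrite lexx pk_gt0 ?S_gt0.
exact: modeq_trans (G_muln_modeq _ _ _ _ Sp) (hM i p).
Qed.

Lemma lattice_real_kernel z : L z -> (forall i, z.1 i = 0) ->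
  forall i p k, S p -> z.2 i p k = 0.
Proof.
move=> Lz z1 i p k Sp; have [M M_gt0 zM] := lattice_real_kernel_mulrn_eq0 Lz z1.
apply: (padic_code_torsion_free (S_prime Sp) (QSn_elt_code i (L_elt Lz) Sp) M_gt0) => k'.
by have := G_muln_modeq z M i k' Sp; rewrite zM => /modeq_sym.
Qed.

Lemma lattice_proj_real_inj l m : L l -> L m -> l.1 = m.1 -> l = m.
Proof.
move=> Ll Lm lm1.
have lm2 i p k : S p -> modeq (pk p k) (m.2 i p k) (l.2 i p k).
  move=> Sp; have := G_sub_modeq m l i k Sp.
  rewrite (@lattice_real_kernel (G_add m (G_opp l))) //.
  - by move/modeq_sym; rewrite /modeq subr0.
  - exact: (LD Lm (LN Ll)).
  - by move=> i'; rewrite /= lm1 subrr.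
case: l m lm1 Ll Lm lm2 => [l1 l2] [m1 m2] /= <- Ll Lm lm2.
have [l2_elt m2_elt] : QSn_elt S l2 /\ QSn_elt S m2 by split; [exact: L_elt Ll | exact: L_elt Lm].
congr pair; apply/funext => i; apply/funext => p; apply/funext => k.
have [Sp|nSp] := pselect (S p).
  exact/esym/(padic_code_eq (QSn_elt_code i m2_elt Sp) (QSn_elt_code i l2_elt Sp))/lm2.
by rewrite (QSn_elt_offS _ _ l2_elt nSp) (QSn_elt_offS _ _ m2_elt nSp).
Qed.

End Discrete.

Definition at_prime p (r : 'I_n -> rat) : 'I_n -> nat -> rat :=
  fun i q => if q == p then r i else 0.

Lemma at_prime_mulrn p r j : at_prime p (r *+ j) = at_prime p r *+ j.
Proof.
by apply/funext => i; apply/funext => q; rewrite !natmulfctE /at_prime; case: eqP; rewrite ?mul0rn.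
Qed.

Definition Z1p_embed p (r : 'I_n -> rat) : QSn n :=
  fun i q k => ratmod (at_prime p r i q) (pk q k).

Lemma Z1p_embed_elt p r : S p -> (forall i, in_Z1p p (r i)) ->
  QSn_elt S (Z1p_embed p r).
Proof.
move=> Sp r_Z1p i; split.
- move=> q Sq; apply: padic_code_ratmod (S_gt0 Sq) _.
  by rewrite /at_prime; case: eqP => [->|_]; [apply: r_Z1p | apply: in_Z1p0].
- move=> q nSq k; rewrite /Z1p_embed /at_prime; case: eqP => [eq_qp|_]; last exact: ratmod0.
  by rewrite eq_qp in nSq.
- by exists p => q lt_pq; rewrite /Z1p_embed /at_prime gtn_eqF // ratmod0.
Qed.

Section Residues.
Variable K : nat -> nat.

(* [res w] determines the class of [w] modulo [prod_p p^(K p) Z_p^n]. *)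
Definition res (w : QSn n) : 'I_n -> nat -> rat := fun i p => w i p (K p).

Definition eq_res (r r' : 'I_n -> nat -> rat) :=
  forall i p, S p -> modeq (pk p (K p)) (r i p) (r' i p).

Definition lattice_res (r : 'I_n -> nat -> rat) := exists2 l, L l & eq_res r (res l.2).

Lemma eq_res_pointwise r r' : (forall i p, S p -> r i p = r' i p) -> eq_res r r'.
Proof. by move=> rr' i p Sp; rewrite rr' //; apply: modeq_refl. Qed.

Lemma res_Z1p_embed p r : eq_res (res (Z1p_embed p r)) (at_prime p r).
Proof. by move=> i q Sq; apply/modeq_ratmod/pk_neq0/S_gt0. Qed.

Lemma lattice_res_eq r r' : lattice_res r -> eq_res r r' -> lattice_res r'.
Proof.
move=> [l Ll rl] rr'; exists l => // i p Sp.
exact: modeq_trans (modeq_sym (rr' i p Sp)) (rl i p Sp).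
Qed.

Lemma lattice_res0 : lattice_res 0.
Proof. by exists (G_zero R n) => //; apply: eq_res_pointwise. Qed.

Lemma lattice_resB r r' : lattice_res r -> lattice_res r' -> lattice_res (r - r').
Proof.
move=> [l Ll rl] [l' Ll' rl']; exists (G_add l (G_opp l')); first by apply/LD/LN.
move=> i p Sp; apply: modeq_trans (modeq_sym (G_sub_modeq _ _ _ _ Sp)).
exact: modeqB (rl i p Sp) (rl' i p Sp).
Qed.

Lemma lattice_resD r r' : lattice_res r -> lattice_res r' -> lattice_res (r + r').
Proof. exact: (subgroupD lattice_res0 lattice_resB). Qed.

Definition lattice_coset (g : Gcar R n) : set (Gcar R n) :=
  [set h | lattice_res (res h.2 - res g.2)].

Lemma lattice_coset_open g : fin_supp K -> G_open S (lattice_coset g).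
Proof.
move=> K_fin h _ hg; exists 1, K; split=> //; split=> // h' _ [_ hh'].
apply: lattice_res_eq hg _ => i p Sp; apply: modeqB (modeq_refl _ _).
by rewrite /res hh' //; apply: modeq_refl.
Qed.

Lemma lattice_coset_saturated g h l :
  lattice_coset g h -> L l -> lattice_coset g (G_add h l).
Proof.
move=> hg Ll; have Ehl : lattice_res (res l.2) by exists l => // i p Sp; apply: modeq_refl.
apply: lattice_res_eq (lattice_resD hg Ehl) _ => i p Sp.
rewrite /= addrAC; apply: modeqB (modeq_refl _ _).
exact/modeq_sym/G_add_modeq.
Qed.

Section Cocompact.
Hypotheses (K_fin : fin_supp K) (L_cocompact : cocompact S L).

Lemma lattice_res_pigeonhole : exists N, forall f : nat -> QSn n,
  (forall j, QSn_elt S (f j)) ->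
  exists j j', (j < j' <= N)%N /\ lattice_res (res (f j') - res (f j)).
Proof.
have [|g _|F [F_fin FC F_cover]] :=
    L_cocompact (C := [set U | exists g, U = lattice_coset g]).
- move=> U [g ->]; split; first exact: lattice_coset_open.
  by move=> h l _; apply: lattice_coset_saturated.
- exists (lattice_coset g); split; first by exists g.
  by rewrite /lattice_coset /= subrr; apply: lattice_res0.
have [N hN] := finite_cover_pigeonhole F_fin.
exists N => f f_elt; pose pt j : Gcar R n := (0, f j).
have [j [j' [U [ljj' FU Uj Uj']]]] := hN pt (fun j => F_cover (pt j) (f_elt j)).
exists j, j'; split=> //; have [g Ug] := FC U FU; rewrite Ug in Uj Uj'.
by have := lattice_resB Uj' Uj; rewrite opprB addrA subrK.
Qed.

(* Pigeonhole on the multiples [j y], [j <= N], of [y = r / p ^ N]. *)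
Lemma lattice_res_at_prime p r : S p -> (forall i, in_Z1p p (r i)) ->
  lattice_res (at_prime p r).
Proof.
move=> Sp r_Z1p; have p_gt0 := S_gt0 Sp.
have [N hN] := lattice_res_pigeonhole.
have [s hs] := in_Z1p_uniform r_Z1p.
pose y i := r i / pk p N.
have y_int i : (pk p (N + s) * y i) \is a Num.int.
  by rewrite pkD [pk p N * _]mulrC -mulrA [pk p N * _]mulrC divfK ?pk_neq0.
have y_Z1p j i : in_Z1p p ((y *+ j) i).
  by exists (N + s)%N; rewrite natmulfctE mulrnAr rpredMn.
have [j [j' [/andP[ljj' lj'N] Ejj']]] :=
  hN (fun j => Z1p_embed p (y *+ j)) (fun j => Z1p_embed_elt Sp (y_Z1p j)).
have -> : at_prime p r = at_prime p y *+ p ^ N.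
  rewrite -at_prime_mulrn; congr at_prime; apply/funext => i.
  by rewrite natmulfctE -mulr_natr divfK ?pk_neq0.
apply: (@subgroup_mulrn_expn _ lattice_res lattice_res0 lattice_resB _ p (j' - j)
  (K p + (N + s))%N N (S_prime Sp)).
- by rewrite subn_gt0 ljj' /=; apply: leq_trans (leq_subr _ _) lj'N.
- rewrite mulrnBr; last exact: ltnW.
  rewrite -(at_prime_mulrn p y j') -(at_prime_mulrn p y j).
  apply: lattice_res_eq Ejj' _ => i q Sq.
  by apply: modeqB; apply: res_Z1p_embed.
- apply: lattice_res_eq lattice_res0 _ => i q Sq.
  rewrite !natmulfctE /at_prime.
  case: (eqVneq q p) => [->|_]; last by rewrite mul0rn; apply: modeq_refl.
  exact/modeq_sym/modeq_mulrn_expn.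
Qed.

Lemma lattice_res_finsupp r : (forall i p, S p -> in_Z1p p (r i p)) ->
  (exists B, forall i p, (B < p)%N -> r i p = 0) -> lattice_res r.
Proof.
move=> r_Z1p [B hB].
have trunc b : lattice_res (fun i q => if (q < b)%N then r i q else 0).
  elim: b => [|b IH]; first exact: lattice_res_eq lattice_res0 (eq_res_pointwise _).
  have [Sb|nSb] := pselect (S b).
    have Eb := lattice_res_at_prime Sb (fun i => r_Z1p i b Sb).
    apply: lattice_res_eq (lattice_resD IH Eb) _.
    apply: eq_res_pointwise => i q _; rewrite addrfctE /= addrfctE /at_prime /=.
    by rewrite ltnS [(q <= b)%N]leq_eqVlt; case: eqP => [->|_]; rewrite ?ltnn ?add0r ?addr0.
  apply: lattice_res_eq IH (eq_res_pointwise _) => i q Sq.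
  by rewrite ltnS [(q <= b)%N]leq_eqVlt; case: eqP => // eq_qb; rewrite eq_qb in Sq.
apply: lattice_res_eq (trunc B.+1) (eq_res_pointwise _) => i q _.
by rewrite ltnS; case: leqP => // /hB ->.
Qed.

Lemma lattice_res_dense w : QSn_elt S w ->
  exists2 l, L l & forall i p, S p -> l.2 i p (K p) = w i p (K p).
Proof.
move=> w_elt; have [l Ll wl] : lattice_res (res w).
  apply: lattice_res_finsupp; last exact: QSn_level_bound w_elt.
  by move=> i p Sp; apply: padic_code_Z1p (QSn_elt_code i w_elt Sp).
exists l => // i p Sp; apply/esym/(padic_code_eq _ _ (wl i p Sp)).
  exact: (QSn_elt_code i w_elt Sp).
exact: (QSn_elt_code i (L_elt Ll) Sp).
Qed.

End Cocompact.
End Residues.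
End Lattice.

Theorem lemma6p6 (R : realType) (S : set nat) (n : nat) (L : set (Gcar R n)) :
  (forall p, S p -> prime p) -> (0 < n)%N -> is_lattice S L ->
  (forall l m, L l -> L m -> l.1 = m.1 -> l = m) /\
  QSn_dense S [set w | exists l, L l /\ l.2 = w].
Proof.
move=> S_prime _ [L_subgroup L_discrete L_cocompact]; split.
  exact: (lattice_proj_real_inj S_prime L_subgroup L_discrete).
move=> V V_open [w [w_elt Vw]].
have [K [K_fin nbhdV]] := V_open w w_elt Vw.
have [l Ll lw] := lattice_res_dense S_prime L_subgroup K_fin L_cocompact w_elt.
exists l.2; split; first by exists l.
by apply: nbhdV => //; case: L_subgroup => /(_ l Ll).
Qed.
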